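(* Let $q$ be a prime power, let $\mathcal{F}$ be a flag on $\mathbb{F}_{q^n}$ whose best friend is the subfield $\mathbb{F}_{q^m}$, and let $\beta\in\mathbb{F}_{q^n}^*$. Then $|\mathrm{Orb}_\beta(\mathcal{F})|=|\beta|$ if and only if $|\beta|$ and $q^m-1$ are coprime. In particular, this equality always holds if $q=2$ and $m=1$.
   Context: A flag on $\mathbb{F}_{q^n}$ is a sequence $(\mathcal{F}_1,\ldots,\mathcal{F}_r)$ of $\mathbb{F}_q$-subspaces with $\{0\}\subsetneq\mathcal{F}_1\subsetneq\cdots\subsetneq\mathcal{F}_r\subsetneq\mathbb{F}_{q^n}$. For $\beta\in\mathbb{F}_{q^n}^*$ of multiplicative order $|\beta|$, $\mathcal{F}\beta=(\mathcal{F}_1\beta,\ldots,\mathcal{F}_r\beta)$ with $\mathcal{U}\beta=\{u\beta:u\in\mathcal{U}\}$, and $\mathrm{Orb}_\beta(\mathcal{F})=\{\mathcal{F}\beta^j:0\le j\le|\beta|-1\}$. A subfield $\mathbb{F}_{q^m}$ is a friend of $\mathcal{F}$ if every $\mathcal{F}_i$ is an $\mathbb{F}_{q^m}$-vector space; the best friend is the largest friend. *)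

From HB Require Import structures.
From mathcomp Require Import all_boot all_order all_algebra all_fingroup all_field.
Set Implicit Arguments. Unset Strict Implicit. Unset Printing Implicit Defensive.
Import GRing.Theory.
Local Open Scope ring_scope.

(* Setting: F = F_q a finite field, L = F_{q^n} a finite-dimensional field
   extension of F.  F_q-subspaces of L are the elements of {vspace L}. *)

Section FlagDefs.
Variables (F : finFieldType) (L : fieldExtType F).

Definition is_flag (fl : seq {vspace L}) : bool :=
  [&& sorted (fun U V : {vspace L} => (U <= V)%VS && (U != V)) fl,
      all (fun U : {vspace L} => U != 0%VS) fl &
      all (fun U : {vspace L} => U != fullv) fl].

Definition vs_mul (U : {vspace L}) (b : L) : {vspace L} := (U * <[b]>)%VS.

Definition flag_mul (fl : seq {vspace L}) (b : L) : seq {vspace L} :=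
  map (fun U => vs_mul U b) fl.

Definition friend (fl : seq {vspace L}) (K : {subfield L}) : Prop :=
  forall U, U \in fl -> forall k u, k \in K -> u \in U -> k * u \in U.

Definition best_friend (fl : seq {vspace L}) (K : {subfield L}) : Prop :=
  friend fl K /\ forall K' : {subfield L}, friend fl K' -> (K' <= K)%VS.

End FlagDefs.

Definition orbit_flag (F : finFieldType) (L : fieldExtType F)
    (fl : seq {vspace L}) (b : {unit (finvect_type L)}) : seq (seq {vspace L}) :=
  undup [seq flag_mul fl (FinRing.uval b ^+ j : L) | j <- iota 0 #[b]%g].

From HB Require Import structures.
From mathcomp Require Import all_boot all_order all_algebra all_fingroup all_field.
Set Implicit Arguments. Unset Strict Implicit. Unset Printing Implicit Defensive.
Import GRing.Theory.

(* The stabiliser of a flag under multiplication consists of the nonzero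
   elements of its best friend K: an element g fixing every F_i makes the
   whole field F_q(g) a friend, hence lies in K.  So F beta^i = F beta^j iff
   beta^(j-i) lies in K, i.e. by Fermat iff |beta| divides (j-i)(q^m - 1),
   and the orbit has |beta| elements exactly when no 0 < k < |beta| does
   this, i.e. when |beta| is coprime to q^m - 1. *)

Lemma coprime_ndvd_mulP (N M : nat) : 0 < N ->
  reflect (forall k, 0 < k < N -> ~~ (N %| k * M)) (coprime N M).
Proof.
move=> N_gt0; apply: (iffP idP) => [coNM k /andP[k_gt0 ltkN] | ndvdN].
  by rewrite Gauss_dvdl //; apply/negP => /(dvdn_leq k_gt0); rewrite leqNgt ltkN.
apply: contraT => ncoNM; set g := gcdn N M.
have g_gt0 : 0 < g by rewrite gcdn_gt0 N_gt0.
have g_gt1 : 1 < g by rewrite ltn_neqAle eq_sym ncoNM g_gt0.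
have dvd_gN : g %| N := dvdn_gcdl N M.
have Ng_gt0 : 0 < N %/ g by rewrite divn_gt0 // dvdn_leq.
have ltNgN : 0 < N %/ g < N by rewrite Ng_gt0 ltn_Pdiv.
have := ndvdN _ ltNgN; rewrite -{1}(divnK dvd_gN) dvdn_pmul2l //.
by rewrite dvdn_gcdr.
Qed.

Lemma uniq_map_iotaP (T : eqType) (f : nat -> T) (N : nat) :
  (forall i k, f (i + k) = f i -> f k = f 0) ->
  reflect (forall k, 0 < k < N -> f k != f 0) (uniq [seq f j | j <- iota 0 N]).
Proof.
move=> f_shift; apply: (iffP idP) => [uniq_f k /andP[k_gt0 ltkN] | f_ne0].
  apply: contraTneq uniq_f => fk0.
  case: N ltkN => // N ltkN; rewrite /= -fk0 map_f // mem_iota k_gt0.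
  by rewrite add1n.
rewrite map_inj_in_uniq ?iota_uniq // => i j; rewrite !mem_iota /= !add0n.
wlog le_ij : i j / i <= j => [WLOG iN jN fij|_ ltjN fij].
  by case: (leqP i j) => [|/ltnW] le; [|apply/esym]; apply: WLOG.
apply/eqP; rewrite eqn_leq le_ij leqNgt; apply/negP => lt_ij.
have lt_ji : 0 < j - i < N by rewrite subn_gt0 lt_ij (leq_ltn_trans (leq_subr i j)).
by have /eqP[] := f_ne0 _ lt_ji; apply: (f_shift i); rewrite subnKC // ltnW.
Qed.

Lemma map_eq_id_in (T : eqType) (f : T -> T) (s : seq T) :
  map f s = s -> {in s, f =1 id}.
Proof.
elim: s => //= x s IHs [fx_x fs_s] y; rewrite in_cons => /predU1P[-> // | ys].
exact: IHs.
Qed.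

Section FlagMul.
Variables (F : finFieldType) (L : fieldExtType F).
Implicit Types (fl : seq {vspace L}) (K : {subfield L}) (a c g : L).
Local Open Scope ring_scope.

Lemma flag_mulA fl a c : flag_mul (flag_mul fl a) c = flag_mul fl (a * c).
Proof.
rewrite /flag_mul -map_comp; apply: eq_map => U /=.
by rewrite /vs_mul -prodvA prodv_line.
Qed.

Lemma flag_mul1 fl : flag_mul fl 1 = fl.
Proof. by rewrite /flag_mul map_id_in // => U _; rewrite /vs_mul prodv1. Qed.

Lemma flag_mulK fl a : a != 0 -> flag_mul (flag_mul fl a) a^-1 = fl.
Proof. by move=> a_neq0; rewrite flag_mulA mulfV ?flag_mul1. Qed.

Lemma friend_flag_mul_id fl K g : friend fl K -> g \in K -> g != 0 ->
  flag_mul fl g = fl.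
Proof.
move=> friend_K gK g_neq0; rewrite /flag_mul map_id_in // => U Ufl /=.
apply/eqP; rewrite eqEdim dim_cosetv // leqnn andbT.
apply/prodvP => u _ uU /vlineP[c ->].
by rewrite mulrC friend_K // memvZ.
Qed.

Lemma flag_mul_id_friend fl g : flag_mul fl g = fl -> friend fl <<1; g>>%VS.
Proof.
move=> fl_g U Ufl k u /Fadjoin_polyP[p /polyOverP p1 ->] uU.
have gU v : v \in U -> g * v \in U.
  rewrite -[in X in _ -> X](map_eq_id_in fl_g Ufl) /vs_mul mulrC => vU.
  by rewrite memv_mul ?memv_line.
have gXU i : g ^+ i * u \in U.
  by elim: i => [|i IHi]; rewrite ?expr0 ?mul1r // exprS -mulrA gU.
rewrite horner_coef mulr_suml; apply: memv_suml => i _.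
have /vlineP[c ->] := p1 i.
by rewrite -mulrA -scalerAl mul1r memvZ.
Qed.

Lemma best_friend_flag_mul_id fl K g : best_friend fl K -> g != 0 ->
  (flag_mul fl g == fl) = (g \in K).
Proof.
move=> [friend_K maxK] g_neq0; apply/eqP/idP => [fl_g | gK].
  by apply: subvP (maxK _ (flag_mul_id_friend fl_g)) _ (memv_adjoin _ _).
exact: friend_flag_mul_id friend_K gK g_neq0.
Qed.

Lemma unit_neq0 (b : {unit (finvect_type L)}) : (FinRing.uval b : L) != 0.
Proof. by rewrite -unitfE (valP b). Qed.

Lemma unitX_in_subfield K (b : {unit (finvect_type L)}) (k : nat) :
  ((FinRing.uval b : L) ^+ k \in K) = (#[b]%g %| k * (#|F| ^ \dim K).-1)%N.
Proof.
set beta : L := FinRing.uval b; set Q := (#|F| ^ \dim K)%N.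
have beta_neq0 : beta != 0 := unit_neq0 b.
have Q_gt0 : (0 < Q)%N by rewrite expn_gt0; apply/orP; left; apply/card_gt0P; exists 0.
rewrite Fermat's_little_theorem -/Q -{1}(prednK Q_gt0) exprS.
rewrite -{3}(mulr1 (beta ^+ k)) (inj_eq (mulfI (expf_neq0 _ beta_neq0))) -exprM.
by rewrite cyclic.order_dvdn -(inj_eq val_inj) FinRing.val_unitX.
Qed.

Lemma size_orbit_flagP fl (b : {unit (finvect_type L)}) :
  reflect (forall k, (0 < k < #[b]%g)%N -> flag_mul fl ((FinRing.uval b : L) ^+ k) != fl)
          (size (orbit_flag fl b) == #[b]%g).
Proof.
set beta : L := FinRing.uval b; set f := fun j => flag_mul fl (beta ^+ j).
have beta_neq0 : beta != 0 := unit_neq0 b.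
have f0 : f 0 = fl by rewrite /f expr0 flag_mul1.
have f_shift i k : f (i + k)%N = f i -> f k = f 0.
  rewrite f0 /f exprD mulrC -flag_mulA => fik.
  have beta_i_neq0 := expf_neq0 i beta_neq0.
  by rewrite -(flag_mulK (flag_mul fl _) beta_i_neq0) fik flag_mulK.
rewrite /orbit_flag -/beta -/f.
have -> : (size (undup [seq f j | j <- iota 0 #[b]%g]) == #[b]%g) =
          uniq [seq f j | j <- iota 0 #[b]%g].
  rewrite -[RHS]negbK -ltn_size_undup ltn_neqAle size_undup andbT negbK.
  by rewrite size_map size_iota.
by have := uniq_map_iotaP #[b]%g f_shift; rewrite f0.
Qed.

End FlagMul.

Theorem corollary4p3 (F : finFieldType) (L : fieldExtType F)
    (fl : seq {vspace L}) (K : {subfield L}) (b : {unit (finvect_type L)}) :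
  is_flag fl -> best_friend fl K ->
  ((size (orbit_flag fl b) = #[b]%g) <-> coprime #[b]%g (#|F| ^ \dim K).-1) /\
  (#|F| = 2 -> \dim K = 1 -> size (orbit_flag fl b) = #[b]%g).
Proof.
move=> _ bfK; set Q := (#|F| ^ \dim K)%N.
have fixE k : (flag_mul fl ((FinRing.uval b : L) ^+ k)%R == fl) = (#[b]%g %| k * Q.-1).
  by rewrite (best_friend_flag_mul_id bfK) ?expf_neq0 ?unit_neq0 // unitX_in_subfield.
have size_orbitE : (size (orbit_flag fl b) = #[b]%g) <-> coprime #[b]%g Q.-1.
  split=> [/eqP/size_orbit_flagP fixN | /(coprime_ndvd_mulP _ (order_gt0 b)) ndvdN].
    by apply/(coprime_ndvd_mulP _ (order_gt0 b)) => k /fixN; rewrite fixE.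
  by apply/eqP/size_orbit_flagP => k /ndvdN; rewrite fixE.
split=> // F2 K1; apply/size_orbitE.
by rewrite /Q F2 K1 coprimen1.
Qed.
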